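(* Let $(\mathfrak{Q},\&,e)$ be a non-trivial unital quantale. For $S\subseteq\mathfrak{Q}$ let $\mathfrak{Q}_S\text{-}\mathbf{FOrd}$ denote the full subcategory of $\mathfrak{Q}\text{-}\mathbf{FOrd}$ consisting of the $\mathfrak{Q}$-preordered $\mathfrak{Q}$-subsets $(X,|\cdot|,\alpha)$ with $|x|\in S$ for all $x\in X$. If $S\subseteq T\subseteq\mathfrak{Q}$, then $\mathfrak{Q}_S\text{-}\mathbf{FOrd}$ is a coreflective subcategory of $\mathfrak{Q}_T\text{-}\mathbf{FOrd}$, with the coreflector sending each $(X,|\cdot|,\alpha)\in\mathfrak{Q}_T\text{-}\mathbf{FOrd}$ to the set $X_S=\{x\in X\mid |x|\in S\}$ equipped with the restrictions of $|\cdot|$ and $\alpha$.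
   Context: A unital quantale $(\mathfrak{Q},\&,e)$ is a complete lattice with an associative join-preserving (in each variable) multiplication $\&$ with unit $e$; non-trivial means $\bot<e$. Implications: $p\& q\le r\iff p\le r/ q\iff q\le p\backslash r$. A $\mathfrak{Q}$-subset is a set $X$ with a map $|\cdot|\colon X\to\mathfrak{Q}$. A $\mathfrak{Q}$-preorder on it is a map $\alpha\colon X\times X\to\mathfrak{Q}$ with, for all $x,y,z$: $(\alpha(x,y)/|x|)\&|x|=\alpha(x,y)=|y|\&(|y|\backslash\alpha(x,y))$; $|x|\le\alpha(x,x)$; $(\alpha(y,z)/|y|)\&\alpha(x,y)=\alpha(y,z)\&(|y|\backslash\alpha(x,y))\le\alpha(x,z)$. $\mathfrak{Q}\text{-}\mathbf{FOrd}$ is the category whose objects are $\mathfrak{Q}$-preordered $\mathfrak{Q}$-subsets $(X,|\cdot|,\alpha)$ and whose morphisms $f\colon(X,\alpha)\to(Y,\beta)$ are $\mathfrak{Q}$-order-preserving maps: maps $f\colon X\to Y$ with $|fx|=|x|$ and $\alpha(x,x')\le\beta(fx,fx')$ for all $x,x'\in X$. A full subcategory is coreflective if the inclusion functor has a right adjoint (the coreflector). *)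

Record Quantale := {
  qcar :> Type;
  qle : qcar -> qcar -> Prop;
  qle_refl : forall x, qle x x;
  qle_trans : forall x y z, qle x y -> qle y z -> qle x z;
  qle_antisym : forall x y, qle x y -> qle y x -> x = y;
  qsup : (qcar -> Prop) -> qcar;
  qsup_ub : forall (A : qcar -> Prop) x, A x -> qle x (qsup A);
  qsup_least : forall (A : qcar -> Prop) y,
      (forall x, A x -> qle x y) -> qle (qsup A) y;
  qmul : qcar -> qcar -> qcar;
  qmulA : forall a b c, qmul a (qmul b c) = qmul (qmul a b) c;
  qe : qcar;
  qmul1l : forall a, qmul qe a = a;
  qmul1r : forall a, qmul a qe = a;
  qmul_supr : forall a (A : qcar -> Prop),
      qmul a (qsup A) = qsup (fun y => exists x, A x /\ y = qmul a x);
  qmul_supl : forall a (A : qcar -> Prop),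
      qmul (qsup A) a = qsup (fun y => exists x, A x /\ y = qmul x a)
}.

Section QDefs.
Variable Q : Quantale.

Definition qbot : Q := qsup Q (fun _ => False).

Definition nontrivial : Prop := qle Q qbot (qe Q) /\ qbot <> qe Q.

(** right implication  r / q  (p & q <= r  iff  p <= r / q) *)
Definition qrdiv (r q : Q) : Q := qsup Q (fun p => qle Q (qmul Q p q) r).
(** left implication  p \ r  (p & q <= r  iff  q <= p \ r) *)
Definition qldiv (p r : Q) : Q := qsup Q (fun q => qle Q (qmul Q p q) r).

(** A Q-subset together with a Q-valued binary map (candidate Q-preorder). *)
Record FObj := {
  fcar : Type;
  fnorm : fcar -> Q;
  falpha : fcar -> fcar -> Q
}.

Definition is_QPreorder (X : FObj) : Prop :=
  let n := fnorm X in let a := falpha X in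
  (forall x y,
      qmul Q (qrdiv (a x y) (n x)) (n x) = a x y /\
      a x y = qmul Q (n y) (qldiv (n y) (a x y))) /\
  (forall x, qle Q (n x) (a x x)) /\
  (forall x y z,
      qmul Q (qrdiv (a y z) (n y)) (a x y) = qmul Q (a y z) (qldiv (n y) (a x y)) /\
      qle Q (qmul Q (qrdiv (a y z) (n y)) (a x y)) (a x z)).

Definition is_QMorph (X Y : FObj) (f : fcar X -> fcar Y) : Prop :=
  (forall x, fnorm Y (f x) = fnorm X x) /\
  (forall x x', qle Q (falpha X x x') (falpha Y (f x) (f x'))).

Definition in_QS_FOrd (S : Q -> Prop) (X : FObj) : Prop :=
  is_QPreorder X /\ forall x, S (fnorm X x).

Definition restrict (X : FObj) (S : Q -> Prop) : FObj := {|
  fcar := { x : fcar X | S (fnorm X x) };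
  fnorm := fun x => fnorm X (proj1_sig x);
  falpha := fun x y => falpha X (proj1_sig x) (proj1_sig y)
|}.

Definition restrict_incl (X : FObj) (S : Q -> Prop) :
  fcar (restrict X S) -> fcar X := fun x => proj1_sig x.

Definition is_coreflection (Small : FObj -> Prop) (X C : FObj)
  (eps : fcar C -> fcar X) : Prop :=
  Small C /\ is_QMorph C X eps /\
  forall A : FObj, Small A -> forall g : fcar A -> fcar X, is_QMorph A X g ->
    exists h : fcar A -> fcar C,
      is_QMorph A C h /\ (forall a, eps (h a) = g a) /\
      forall h' : fcar A -> fcar C, is_QMorph A C h' ->
        (forall a, eps (h' a) = g a) -> forall a, h' a = h a.

End QDefs.

From Stdlib Require Import ProofIrrelevance.

(* X_S inherits every axiom of a Q-preorder pointwise from X, and a morphism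
   A -> X out of an object with norms in S lands in X_S because morphisms
   preserve norms; it factors through the inclusion X_S -> X, uniquely since
   the inclusion is injective (membership proofs are irrelevant). *)

Section Restriction.
Variable Q : Quantale.
Variable S : Q -> Prop.

Lemma restrict_QPreorder (X : FObj Q) :
  is_QPreorder Q X -> is_QPreorder Q (restrict Q X S).
Proof.
  intros [Hnorm [Hrefl Htrans]].
  split; [|split]; simpl.
  - intros x y; apply Hnorm.
  - intros x; apply Hrefl.
  - intros x y z; apply Htrans.
Qed.

Lemma restrict_in_QS_FOrd (X : FObj Q) :
  is_QPreorder Q X -> in_QS_FOrd Q S (restrict Q X S).
Proof.
  intros HX; split.
  - exact (restrict_QPreorder X HX).
  - intros [x Hx]; exact Hx.
Qed.

Lemma restrict_incl_QMorph (X : FObj Q) :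
  is_QMorph Q (restrict Q X S) X (restrict_incl Q X S).
Proof.
  split; simpl.
  - reflexivity.
  - intros x x'; apply qle_refl.
Qed.

Lemma restrict_incl_inj (X : FObj Q) (x y : fcar Q (restrict Q X S)) :
  restrict_incl Q X S x = restrict_incl Q X S y -> x = y.
Proof.
  destruct x as [x Hx], y as [y Hy]; simpl; intros <-.
  f_equal; apply proof_irrelevance.
Qed.

Section Corestriction.
Variables A X : FObj Q.
Variable g : fcar Q A -> fcar Q X.
Hypothesis HA : forall a, S (fnorm Q A a).
Hypothesis Hg : is_QMorph Q A X g.

Lemma QMorph_norm_in (a : fcar Q A) : S (fnorm Q X (g a)).
Proof. destruct Hg as [Hgnorm _]; rewrite Hgnorm; apply HA. Qed.

Definition corestrict (a : fcar Q A) : fcar Q (restrict Q X S) :=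
  exist _ (g a) (QMorph_norm_in a).

Lemma corestrict_QMorph : is_QMorph Q A (restrict Q X S) corestrict.
Proof. exact Hg. Qed.

Lemma restrict_incl_corestrict (a : fcar Q A) :
  restrict_incl Q X S (corestrict a) = g a.
Proof. reflexivity. Qed.

End Corestriction.
End Restriction.

Theorem lemma3p8 (Q : Quantale) (HQ : nontrivial Q) (S T : Q -> Prop)
  (HST : forall q, S q -> T q) :
  forall X : FObj Q, in_QS_FOrd Q T X ->
    is_coreflection Q (in_QS_FOrd Q S) X (restrict Q X S) (restrict_incl Q X S).
Proof.
  intros X [HX _].
  split; [|split].
  - exact (restrict_in_QS_FOrd Q S X HX).
  - exact (restrict_incl_QMorph Q S X).
  - intros A [_ HA] g Hg.
    exists (corestrict Q S A X g HA Hg).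
    split; [|split].
    + exact (corestrict_QMorph Q S A X g HA Hg).
    + exact (restrict_incl_corestrict Q S A X g HA Hg).
    + intros h' _ Hh' a.
      apply restrict_incl_inj.
      rewrite Hh'; symmetry; apply restrict_incl_corestrict.
Qed.
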